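(* Let $\mathbb X,\mathbb Y,\mathbb X^\sharp,\mathbb Y^\sharp$ be sets, $c:\mathbb X\times\mathbb X^\sharp\to\overline{\mathbb R}$, $d:\mathbb Y\times\mathbb Y^\sharp\to\overline{\mathbb R}$ couplings, and $K:\mathbb X\times\mathbb Y\to\overline{\mathbb R}$, $f:\mathbb X\to\overline{\mathbb R}$, $g:\mathbb Y\to\overline{\mathbb R}$. For $(x^\sharp,y)\in\mathbb X^\sharp\times\mathbb Y$ define $$K_{x^\sharp}(y)=-\big(K(\cdot,y)\big)^{c}(x^\sharp)=\inf_{x\in\mathbb X}\big((-c(x,x^\sharp))\mathbin{\overset{\cdot}{+}} K(x,y)\big).$$ Suppose that for every $x^\sharp\in\mathbb X^\sharp$, $$\sup_{y\in\mathbb Y}\big((-K_{x^\sharp}(y))\mathbin{\underset{\cdot}{+}}(-g(y))\big)=\inf_{y^\sharp\in\mathbb Y^\sharp}\big(K_{x^\sharp}^{d}(y^\sharp)\mathbin{\overset{\cdot}{+}} g^{-d}(y^\sharp)\big).$$ Then: if $f(x)=\inf_{y\in\mathbb Y}\big(K(x,y)\mathbin{\overset{\cdot}{+}} g(y)\big)$ for all $x\in\mathbb X$, it follows that $f^{c}(x^\sharp)=\inf_{y^\sharp\in\mathbb Y^\sharp}\big(K^{c\mathbin{\underset{\cdot}{+}} d}(x^\sharp,y^\sharp)\mathbin{\overset{\cdot}{+}} g^{-d}(y^\sharp)\big)$ for all $x^\sharp\in\mathbb X^\sharp$.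
   Context: $\overline{\mathbb R}=[-\infty,+\infty]$. The Moreau lower addition $\mathbin{\underset{\cdot}{+}}$ is usual addition extended by $(+\infty)\mathbin{\underset{\cdot}{+}}(-\infty)=(-\infty)\mathbin{\underset{\cdot}{+}}(+\infty)=-\infty$; the Moreau upper addition $\mathbin{\overset{\cdot}{+}}$ is usual addition extended by $(+\infty)\mathbin{\overset{\cdot}{+}}(-\infty)=(-\infty)\mathbin{\overset{\cdot}{+}}(+\infty)=+\infty$. For $h:\mathbb X\to\overline{\mathbb R}$, $h^{c}(x^\sharp)=\sup_{x}\big(c(x,x^\sharp)\mathbin{\underset{\cdot}{+}}(-h(x))\big)$. For $k:\mathbb Y\to\overline{\mathbb R}$, $k^{d}(y^\sharp)=\sup_{y}\big(d(y,y^\sharp)\mathbin{\underset{\cdot}{+}}(-k(y))\big)$ and $k^{-d}(y^\sharp)=\sup_{y}\big((-d(y,y^\sharp))\mathbin{\underset{\cdot}{+}}(-k(y))\big)$. $K^{c\mathbin{\underset{\cdot}{+}} d}(x^\sharp,y^\sharp)=\sup_{x\in\mathbb X,y\in\mathbb Y}\big(c(x,x^\sharp)\mathbin{\underset{\cdot}{+}} d(y,y^\sharp)\mathbin{\underset{\cdot}{+}}(-K(x,y))\big)$. *)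

From HB Require Import structures.
From mathcomp Require Import all_boot all_order all_algebra.
From mathcomp Require Import all_classical all_reals all_analysis.
Set Implicit Arguments. Unset Strict Implicit. Unset Printing Implicit Defensive.
Import Order.TTheory GRing.Theory Num.Theory.
Local Open Scope classical_set_scope.
Local Open Scope ereal_scope.

(* Moreau lower addition: +oo (+.) -oo = -oo  (mathcomp's adde) *)
Definition lplus {R : realType} (a b : \bar R) : \bar R := adde a b.
(* Moreau upper addition: +oo (+^) -oo = +oo  (mathcomp's dual_adde) *)
Definition uplus {R : realType} (a b : \bar R) : \bar R := dual_adde a b.

Definition cconj {R : realType} {X Xs : Type} (c : X -> Xs -> \bar R)
  (h : X -> \bar R) (xs : Xs) : \bar R :=
  ereal_sup (range (fun x => lplus (c x xs) (- h x))).

Definition negcconj {R : realType} {Y Ys : Type} (d : Y -> Ys -> \bar R)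
  (k : Y -> \bar R) (ys : Ys) : \bar R :=
  ereal_sup (range (fun y => lplus (- d y ys) (- k y))).

Definition cdconj {R : realType} {X Y Xs Ys : Type} (c : X -> Xs -> \bar R)
  (d : Y -> Ys -> \bar R) (K : X -> Y -> \bar R) (xs : Xs) (ys : Ys) : \bar R :=
  ereal_sup (range (fun p : X * Y =>
    lplus (lplus (c p.1 xs) (d p.2 ys)) (- K p.1 p.2))).

Definition Ksharp {R : realType} {X Y Xs : Type} (c : X -> Xs -> \bar R)
  (K : X -> Y -> \bar R) (xs : Xs) (y : Y) : \bar R :=
  - cconj c (fun x => K x y) xs.

From HB Require Import structures.
From mathcomp Require Import all_boot all_order all_algebra.
From mathcomp Require Import all_classical all_reals all_analysis.
Import Order.TTheory GRing.Theory Num.Theory DualAddTheory.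
Local Open Scope classical_set_scope.
Local Open Scope ereal_scope.

(* Writing f as an infimum, f^c(x#) is a double supremum over (x, y) of
   c(x,x#) - K(x,y) - g(y).  Taking the supremum over x first gives
   sup_y ((-K_{x#}(y)) + (-g(y))), which the hypothesis turns into an infimum
   over y# of K_{x#}^d + g^{-d}; merging the two suprema in K_{x#}^d(y#) gives
   K^{c+d}(x#,y#).  These rearrangements are exact in the extended reals
   because the lower addition commutes with suprema, a + sup S = sup (a + S),
   even for a = +oo or -oo, and because -(a +^ b) = (-a) + (-b). *)

Section ereal_sup_family.
Context {R : realType}.

Lemma ereal_supDl (I : Type) (a : \bar R) (h : I -> \bar R) :
  ereal_sup (range (fun i => a + h i)) = a + ereal_sup (range h).
Proof.
apply/le_anti/andP; split.
  by apply/ereal_supP => _ [i _ <-]; apply: leeD2l; apply: ereal_sup_ubound; exists i.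
case: a => [r| |]; last by rewrite leNye.
- rewrite -leeBrDl //; apply/ereal_supP => _ [i _ <-].
  by rewrite leeBrDl //; apply: ereal_sup_ubound; exists i.
- have [->|] := eqVneq (ereal_sup (range h)) -oo; first by rewrite leNye.
  rewrite -ltNye => /ereal_sup_gtP [_ [i _ <-] hi].
  rewrite [X in _ <= X]ereal_supy ?leey //.
  by exists i => //; rewrite addye // gt_eqF.
Qed.

Lemma ereal_sup_comm (I J : Type) (h : I -> J -> \bar R) :
  ereal_sup (range (fun i => ereal_sup (range (h i)))) =
  ereal_sup (range (fun j => ereal_sup (range (h^~ j)))).
Proof.
wlog suff: I J h / ereal_sup (range (fun i => ereal_sup (range (h i)))) <=
                   ereal_sup (range (fun j => ereal_sup (range (h^~ j)))).
  by move=> le_sup; apply/le_anti; rewrite le_sup (le_sup _ _ (fun j i => h i j)).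
apply/ereal_supP => _ [i _ <-]; apply/ereal_supP => _ [j _ <-].
apply: (@le_trans _ _ (ereal_sup (range (h^~ j)))).
  by apply: ereal_sup_ubound; exists i.
by apply: ereal_sup_ubound; exists j.
Qed.

Lemma ereal_sup_prod (I J : Type) (h : I -> J -> \bar R) :
  ereal_sup (range (fun j => ereal_sup (range (h^~ j)))) =
  ereal_sup (range (fun p : I * J => h p.1 p.2)).
Proof.
apply/le_anti/andP; split.
  apply/ereal_supP => _ [j _ <-]; apply/ereal_supP => _ [i _ <-].
  by apply: ereal_sup_ubound; exists (i, j).
apply/ereal_supP => _ [[i j] _ <-] /=.
apply: (@le_trans _ _ (ereal_sup (range (h^~ j)))).
  by apply: ereal_sup_ubound; exists i.
by apply: ereal_sup_ubound; exists j.
Qed.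

Lemma oppe_ereal_inf (I : Type) (h : I -> \bar R) :
  - ereal_inf (range h) = ereal_sup (range (fun i => - h i)).
Proof. by rewrite -ereal_supN image_comp. Qed.

End ereal_sup_family.

Section moreau_additions.
Context {R : realType}.
Implicit Types a b : \bar R.

(* [+] in [ereal_scope] is [GRing.add], which [rewrite] does not identify with
   the [adde] in [lplus]. *)
Lemma lplusE a b : lplus a b = a + b. Proof. by []. Qed.

Lemma oppe_uplus a b : - uplus a b = - a + - b.
Proof.
have -> : uplus a b = - (- a + - b) by exact: dual_addeE.
by rewrite oppeK.
Qed.

End moreau_additions.

Section conjugates.
Context {R : realType} {X Y Xs : Type}.
Variables (c : X -> Xs -> \bar R) (K : X -> Y -> \bar R).

Lemma cconj_Ksharp (Ys : Type) (d : Y -> Ys -> \bar R) xs ys :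
  cconj d (Ksharp c K xs) ys = cdconj c d K xs ys.
Proof.
rewrite /cconj /cdconj -(@ereal_sup_prod _ _ _ (fun x y => c x xs + d y ys - K x y)).
congr ereal_sup; apply: eq_imagel => y _.
rewrite lplusE /Ksharp oppeK /cconj -ereal_supDl.
by congr ereal_sup; apply: eq_imagel => x _; rewrite lplusE addeCA addeA.
Qed.

Lemma cconj_inf_uplus (g : Y -> \bar R) xs :
  cconj c (fun x => ereal_inf (range (fun y => uplus (K x y) (g y)))) xs =
  ereal_sup (range (fun y => lplus (- Ksharp c K xs y) (- g y))).
Proof.
transitivity (ereal_sup (range (fun x => ereal_sup (range (fun y =>
                c x xs + (- K x y + - g y)))))).
  congr ereal_sup; apply: eq_imagel => x _.
  rewrite lplusE oppe_ereal_inf -ereal_supDl.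
  by congr ereal_sup; apply: eq_imagel => y _; rewrite oppe_uplus.
rewrite ereal_sup_comm; congr ereal_sup; apply: eq_imagel => y _.
rewrite lplusE /Ksharp oppeK /cconj addeC -ereal_supDl.
by congr ereal_sup; apply: eq_imagel => x _; rewrite lplusE addeA addeC.
Qed.

End conjugates.

Theorem corollary2 (R : realType) (X Y Xs Ys : Type)
  (c : X -> Xs -> \bar R) (d : Y -> Ys -> \bar R)
  (K : X -> Y -> \bar R) (f : X -> \bar R) (g : Y -> \bar R) :
  (forall xs : Xs,
     ereal_sup (range (fun y => lplus (- Ksharp c K xs y) (- g y))) =
     ereal_inf (range (fun ys => uplus (cconj d (Ksharp c K xs) ys)
                                       (negcconj d g ys)))) ->
  (forall x : X, f x = ereal_inf (range (fun y => uplus (K x y) (g y)))) ->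
  forall xs : Xs,
    cconj c f xs =
    ereal_inf (range (fun ys => uplus (cdconj c d K xs ys) (negcconj d g ys))).
Proof.
move=> duality f_inf xs.
rewrite (funext f_inf) cconj_inf_uplus duality.
by under eq_imagel do rewrite cconj_Ksharp.
Qed.
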